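(* Let $\{G^k\}$ be a $B$-strongly connected sequence of digraphs on $\{1,\dots,I\}$, and let each $\mathbf{A}^k=(a_{ij}^k)$ be compliant with $G^k$ (constant $\kappa>0$) and column stochastic. Consider the condensed push-sum protocol with $\phi_{(i)}^0=1$, arbitrary $\mathbf{x}_{(i)}^0\in\mathbb{R}^m$, and $\phi_{(i)}^{k+1}=\sum_ja_{ij}^k\phi_{(j)}^k$, $\mathbf{x}_{(i)}^{k+1}=\frac{1}{\phi_{(i)}^{k+1}}\sum_ja_{ij}^k\phi_{(j)}^k\mathbf{x}_{(j)}^k$. Then for all $k\ge0$: (a) $\sum_{i}\phi_{(i)}^{k+1}\mathbf{x}_{(i)}^{k+1}=\sum_i\phi_{(i)}^k\mathbf{x}_{(i)}^k=\sum_i\phi_{(i)}^0\mathbf{x}_{(i)}^0$; (b) for all $i$, $$\Big\|\mathbf{x}_{(i)}^k-\frac1I\sum_{j=1}^I\phi_{(j)}^k\mathbf{x}_{(j)}^k\Big\|\le c_d\,\rho_d^k\,\|\mathbf{x}^0\|,$$ with $\tilde\kappa_d\triangleq\kappa^{2(I-1)B+1}/I$, $\rho_d\triangleq(1-\tilde\kappa_d^{(I-1)B})^{1/((I-1)B)}$, $c_d\triangleq\frac{2I}{\rho_d}\cdot\frac{2(1+\tilde\kappa_d^{-(I-1)B})}{1-\tilde\kappa_d^{(I-1)B}}$, and $\mathbf{x}^0=(\mathbf{x}^0_{(i)})_{i=1}^I$.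
   Context: A digraph at time $k$ is $G^k=(V,E^k)$, $V=\{1,\dots,I\}$, with edge $(j,i)\in E^k$ meaning $j$ can send to $i$. The sequence is $B$-strongly connected if there is an integer $B>0$ such that for every $k$ the digraph with edge set $\bigcup_{t=k}^{k+B-1}E^t$ is strongly connected. $\mathbf{A}^k$ is compliant with $G^k$ (constant $\kappa>0$) if $a_{ij}^k=0$ whenever $j\ne i$ and $(j,i)\notin E^k$, $a_{ij}^k\ge\kappa$ whenever $(j,i)\in E^k$, and $a_{ii}^k\ge\kappa$; it is column stochastic if its entries are nonnegative and $\mathbf{1}^T\mathbf{A}^k=\mathbf{1}^T$. *)

From Stdlib Require Import Reals Relations.
Open Scope R_scope.

(* Nodes are 0, ..., I-1 (the paper's 1, ..., I). *)

Fixpoint fsum (n : nat) (f : nat -> R) : R :=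
  match n with
  | O => 0
  | S n' => fsum n' f + f n'
  end.

(* A time-varying digraph sequence: E k j i  means  (j,i) \in E^k,
   i.e. j can send to i at time k. *)
Definition digraph_seq := nat -> nat -> nat -> Prop.

Definition strongly_connected (I : nat) (Ed : nat -> nat -> Prop) : Prop :=
  forall i j, (i < I)%nat -> (j < I)%nat ->
    clos_refl_trans_1n nat (fun u v => (u < I)%nat /\ (v < I)%nat /\ Ed u v) i j.

Definition B_strongly_connected (I : nat) (E : digraph_seq) (B : nat) : Prop :=
  (0 < B)%nat /\
  forall k, strongly_connected I
    (fun u v => exists t, (k <= t)%nat /\ (t <= k + B - 1)%nat /\ E t u v).

(* A k i j = a_{ij}^k *)
Definition matrix_seq := nat -> nat -> nat -> R.

Definition compliant (I : nat) (E : digraph_seq) (A : matrix_seq) (kappa : R) : Prop :=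
  forall k i j, (i < I)%nat -> (j < I)%nat ->
    ((j <> i -> ~ E k j i -> A k i j = 0) /\
     (E k j i -> kappa <= A k i j) /\
     kappa <= A k i i).

Definition column_stochastic (I : nat) (A : matrix_seq) : Prop :=
  forall k,
    (forall i j, (i < I)%nat -> (j < I)%nat -> 0 <= A k i j) /\
    (forall j, (j < I)%nat -> fsum I (fun i => A k i j) = 1).

Fixpoint ps_phi (I : nat) (A : matrix_seq) (k i : nat) : R :=
  match k with
  | O => 1
  | S k' => fsum I (fun j => A k' i j * ps_phi I A k' j)
  end.

(* Estimates x^k_(i), a vector in R^m given as its coordinate function l |-> x_l. *)
Fixpoint ps_x (I : nat) (A : matrix_seq) (x0 : nat -> nat -> R) (k i : nat) : nat -> R :=
  match k with
  | O => x0 i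
  | S k' => fun l =>
      / ps_phi I A (S k') i *
      fsum I (fun j => A k' i j * ps_phi I A k' j * ps_x I A x0 k' j l)
  end.

Definition vnorm (m : nat) (v : nat -> R) : R :=
  sqrt (fsum m (fun l => v l ^ 2)).

Definition stacked_norm (I m : nat) (x : nat -> nat -> R) : R :=
  sqrt (fsum I (fun i => fsum m (fun l => x i l ^ 2))).

Definition kappa_tilde_d (I B : nat) (kappa : R) : R :=
  kappa ^ (2 * (I - 1) * B + 1) / INR I.

Definition rho_d (I B : nat) (kappa : R) : R :=
  Rpower (1 - kappa_tilde_d I B kappa ^ ((I - 1) * B)) (/ INR ((I - 1) * B)).

Definition c_d (I B : nat) (kappa : R) : R :=
  let t := kappa_tilde_d I B kappa ^ ((I - 1) * B) in
  (2 * INR I / rho_d I B kappa) * (2 * (1 + / t) / (1 - t)).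

(* Unrolling the recursion, phi^k and phi^k x^k are the images of 1 and x^0 under the
   backward product P = A^(k-1) ... A^0, so (a) is column stochasticity and x^k_(i) is the
   mean of x^0 weighted by the i-th row of P. Along a B-strongly connected sequence the
   set of nodes reached from r with weight >= kappa^n gains a node every B steps, so every
   product of L = (I-1)B consecutive matrices has all entries >= kappa^L. Hence each block
   of L steps shrinks the spread of every row of P by q = 1 - I kappa^L, and phi^k >= kappa^L;
   comparing the weighted mean with the plain mean gives a deviation of at most
   q^(k/L) kappa^(-L) sum_r |x^0_r|, and kappa_tilde_d <= kappa makes q <= rho_d^L. *)

From Stdlib Require Import Reals Relations Wf_nat Lra Lia Psatz Classical.
Open Scope R_scope.

Lemma fsum_ext n f g : (forall i, (i < n)%nat -> f i = g i) -> fsum n f = fsum n g.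
Proof.
  induction n as [|n IH]; intros H; simpl; auto.
  rewrite IH by (intros; apply H; lia). rewrite H by lia. reflexivity.
Qed.

Lemma fsum_plus n f g : fsum n (fun i => f i + g i) = fsum n f + fsum n g.
Proof. induction n; simpl; [lra|]. rewrite IHn. lra. Qed.

Lemma fsum_minus n f g : fsum n (fun i => f i - g i) = fsum n f - fsum n g.
Proof. induction n; simpl; [lra|]. rewrite IHn. lra. Qed.

Lemma fsum_scal_l n c f : fsum n (fun i => c * f i) = c * fsum n f.
Proof. induction n; simpl; [lra|]. rewrite IHn. lra. Qed.

Lemma fsum_scal_r n c f : fsum n (fun i => f i * c) = fsum n f * c.
Proof. induction n; simpl; [lra|]. rewrite IHn. lra. Qed.

Lemma fsum_const n c : fsum n (fun _ => c) = INR n * c.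
Proof. induction n; simpl fsum; [simpl; lra|]. rewrite IHn, S_INR. lra. Qed.

Lemma fsum_swap n p f :
  fsum n (fun i => fsum p (fun j => f i j)) = fsum p (fun j => fsum n (fun i => f i j)).
Proof.
  induction n; simpl.
  - rewrite fsum_const. lra.
  - rewrite IHn, <- fsum_plus. reflexivity.
Qed.

Lemma fsum_le n f g : (forall i, (i < n)%nat -> f i <= g i) -> fsum n f <= fsum n g.
Proof.
  induction n; simpl; intros H; [lra|].
  assert (f n <= g n) by (apply H; lia).
  assert (fsum n f <= fsum n g) by (apply IHn; intros; apply H; lia). lra.
Qed.

Lemma fsum_nonneg n f : (forall i, (i < n)%nat -> 0 <= f i) -> 0 <= fsum n f.
Proof. intros H. rewrite <- (Rmult_0_r (INR n)), <- fsum_const. apply fsum_le. auto. Qed.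

Lemma fsum_ge_term n f i :
  (forall j, (j < n)%nat -> 0 <= f j) -> (i < n)%nat -> f i <= fsum n f.
Proof.
  induction n; intros H Hi; [lia|]. simpl.
  assert (0 <= f n) by (apply H; lia).
  destruct (Nat.eq_dec i n) as [->|Hne].
  - assert (0 <= fsum n f) by (apply fsum_nonneg; intros; apply H; lia). lra.
  - assert (f i <= fsum n f) by (apply IHn; [intros; apply H|]; lia). lra.
Qed.

Lemma fsum_abs n f : Rabs (fsum n f) <= fsum n (fun i => Rabs (f i)).
Proof.
  induction n; simpl; [rewrite Rabs_R0; lra|].
  eapply Rle_trans; [apply Rabs_triang|]. lra.
Qed.

Lemma fsum_single n g r :
  (forall j, j <> r -> g j = 0) -> (r < n)%nat -> fsum n g = g r.
Proof.
  intros H. induction n; simpl; intros Hr; [lia|].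
  destruct (Nat.eq_dec r n) as [->|Hne].
  - rewrite (fsum_ext n g (fun _ => 0)), fsum_const by (intros; apply H; lia). lra.
  - rewrite IHn, (H n) by lia. lra.
Qed.

Lemma fsum_cross_le n f a :
  2 * fsum n f * a <= fsum n (fun i => f i ^ 2) + INR n * a ^ 2.
Proof.
  induction n; cbn [fsum]; [simpl; nra|]. rewrite S_INR.
  pose proof (pow2_ge_0 (f n - a)). nra.
Qed.

Lemma fsum_Cauchy_Schwarz n f : fsum n f ^ 2 <= INR n * fsum n (fun i => f i ^ 2).
Proof.
  induction n; cbn [fsum]; [simpl; nra|]. rewrite S_INR.
  pose proof (fsum_cross_le n f (f n)). nra.
Qed.
Fixpoint nsum (n : nat) (f : nat -> nat) : nat :=
  match n with O => O | S n' => (nsum n' f + f n')%nat end.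

Lemma nsum_le n f g :
  (forall i, (i < n)%nat -> (f i <= g i)%nat) -> (nsum n f <= nsum n g)%nat.
Proof.
  induction n; simpl; intros H; [lia|].
  assert (nsum n f <= nsum n g)%nat by (apply IHn; intros; apply H; lia).
  specialize (H n ltac:(lia)). lia.
Qed.

Lemma nsum_lt n f g i :
  (forall i, (i < n)%nat -> (f i <= g i)%nat) -> (i < n)%nat -> (f i < g i)%nat ->
  (nsum n f < nsum n g)%nat.
Proof.
  induction n; simpl; intros H Hi Hlt; [lia|].
  destruct (Nat.eq_dec i n) as [->|Hne].
  - assert (nsum n f <= nsum n g)%nat by (apply nsum_le; intros; apply H; lia). lia.
  - assert (nsum n f < nsum n g)%nat by (apply IHn; [intros; apply H|..]; auto; lia).
    specialize (H n ltac:(lia)). lia.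
Qed.

Lemma nsum_all_one n f : (forall i, (i < n)%nat -> f i = 1%nat) -> nsum n f = n.
Proof.
  induction n; simpl; intros H; auto.
  rewrite IHn by (intros; apply H; lia). rewrite H by lia. lia.
Qed.

Lemma nsum_ge_term n f i : (i < n)%nat -> (f i <= nsum n f)%nat.
Proof.
  induction n; simpl; intros Hi; [lia|].
  destruct (Nat.eq_dec i n) as [->|Hne]; [lia|]. specialize (IHn ltac:(lia)). lia.
Qed.

(* A growing family of node sets Q j on {0..I-1} that gains a node at every step
   until it is full: counting its elements shows it is full after I - 1 steps. *)
Section Flooding.
Variables (I : nat) (Q : nat -> nat -> Prop).
Hypothesis Q_dec : forall j t, {Q j t} + {~ Q j t}.
Hypothesis Q_mono : forall j t, (t < I)%nat -> Q j t -> Q (S j) t.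
Hypothesis Q_grow : forall j, (exists w, (w < I)%nat /\ ~ Q j w) ->
  exists v, (v < I)%nat /\ ~ Q j v /\ Q (S j) v.

Let count j := nsum I (fun t => if Q_dec j t then 1%nat else 0%nat).

Lemma flooding_count r : (r < I)%nat -> Q 0 r -> forall j, (j < I)%nat -> (S j <= count j)%nat.
Proof.
  intros Hr HQr. induction j as [|j IH]; intros Hj.
  - unfold count. eapply Nat.le_trans; [|apply (nsum_ge_term _ _ r Hr)].
    cbv beta. destruct (Q_dec 0 r); [lia|contradiction].
  - specialize (IH ltac:(lia)).
    destruct (classic (exists w, (w < I)%nat /\ ~ Q j w)) as [Hex|Hfull].
    + destruct (Q_grow j Hex) as [v [Hv [Hnot Hnew]]].
      enough (count j < count (S j))%nat by lia.
      apply nsum_lt with v; auto.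
      * intros t Ht. destruct (Q_dec j t) as [Hq|]; [|lia].
        destruct (Q_dec (S j) t) as [|Hq']; [lia|]. exfalso; auto.
      * destruct (Q_dec j v); [contradiction|]. destruct (Q_dec (S j) v); [lia|contradiction].
    + unfold count. rewrite nsum_all_one; [lia|]. intros t Ht.
      destruct (Q_dec (S j) t) as [|Hq]; [reflexivity|]. exfalso.
      apply Hq, Q_mono; auto. apply NNPP. intros Hn. eauto.
Qed.

Lemma flooding r : (r < I)%nat -> Q 0 r -> forall t, (t < I)%nat -> Q (I - 1) t.
Proof.
  intros Hr HQr t Ht. apply NNPP. intros Hn.
  pose proof (flooding_count r Hr HQr (I - 1) ltac:(lia)).
  enough (count (I - 1) < I)%nat by lia.
  rewrite <- (nsum_all_one I (fun _ => 1%nat)) at 2 by auto.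
  apply nsum_lt with t; auto.
  - intros u _. destruct (Q_dec (I - 1) u); lia.
  - destruct (Q_dec (I - 1) t); [contradiction|lia].
Qed.
End Flooding.

Lemma clos_refl_trans_1n_exit (Rel : nat -> nat -> Prop) (P : nat -> Prop) a b :
  clos_refl_trans_1n nat Rel a b -> P a -> ~ P b -> exists x y, Rel x y /\ P x /\ ~ P y.
Proof.
  induction 1 as [|x y z Hxy _ IH]; intros Ha Hb; [contradiction|].
  destruct (classic (P y)); eauto.
Qed.

Definition unit_vec (r j : nat) : R := if Nat.eq_dec r j then 1 else 0.

Lemma unit_vec_nonneg r j : 0 <= unit_vec r j.
Proof. unfold unit_vec; destruct (Nat.eq_dec r j); lra. Qed.

Lemma fsum_unit_vec n r : (r < n)%nat -> fsum n (unit_vec r) = 1.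
Proof.
  intros Hr. rewrite (fsum_single n _ r); auto.
  - unfold unit_vec; destruct (Nat.eq_dec r r); [lra|congruence].
  - intros j Hj; unfold unit_vec; destruct (Nat.eq_dec r j); [lia|lra].
Qed.

Fixpoint evolve (I : nat) (A : matrix_seq) (s : nat) (v : nat -> R) (n : nat) : nat -> R :=
  match n with
  | O => v
  | S n' => fun i => fsum I (fun j => A (s + n')%nat i j * evolve I A s v n' j)
  end.

Section Evolve.
Variables (I : nat) (A : matrix_seq).

Lemma evolve_add s v n1 n2 i :
  evolve I A s v (n1 + n2) i = evolve I A (s + n1) (evolve I A s v n1) n2 i.
Proof.
  revert i; induction n2; intros i; simpl.
  - rewrite Nat.add_0_r. reflexivity.
  - rewrite Nat.add_succ_r. simpl. apply fsum_ext; intros j _.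
    rewrite IHn2, Nat.add_assoc. reflexivity.
Qed.

Lemma evolve_linear s v n i : (i < I)%nat ->
  evolve I A s v n i = fsum I (fun r => v r * evolve I A s (unit_vec r) n i).
Proof.
  revert i; induction n; intros i Hi; simpl.
  - rewrite (fsum_single I _ i); auto.
    + unfold unit_vec; destruct (Nat.eq_dec i i); [lra|congruence].
    + intros j Hj; unfold unit_vec; destruct (Nat.eq_dec j i); [lia|lra].
  - transitivity (fsum I (fun j => fsum I (fun r =>
      v r * (A (s + n)%nat i j * evolve I A s (unit_vec r) n j)))).
    + apply fsum_ext; intros j Hj. rewrite IHn, <- fsum_scal_l by auto.
      apply fsum_ext; intros; ring.
    + rewrite fsum_swap. apply fsum_ext; intros r _. apply fsum_scal_l.
Qed.

Hypothesis hcs : column_stochastic I A.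

Lemma evolve_sum s v n : fsum I (evolve I A s v n) = fsum I v.
Proof.
  induction n; simpl; [reflexivity|].
  rewrite fsum_swap, <- IHn. apply fsum_ext; intros j Hj.
  rewrite fsum_scal_r. destruct (hcs (s + n)%nat) as [_ H]. rewrite H by auto. ring.
Qed.

Lemma evolve_nonneg s v n :
  (forall j, (j < I)%nat -> 0 <= v j) -> forall i, (i < I)%nat -> 0 <= evolve I A s v n i.
Proof.
  intros Hv. induction n; intros i Hi; simpl; auto.
  apply fsum_nonneg; intros j Hj. destruct (hcs (s + n)%nat) as [H _].
  apply Rmult_le_pos; auto.
Qed.

Lemma evolve_ge_term s v n i j :
  (forall j, (j < I)%nat -> 0 <= v j) -> (i < I)%nat -> (j < I)%nat ->
  A (s + n)%nat i j * evolve I A s v n j <= evolve I A s v (S n) i.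
Proof.
  intros Hv Hi Hj. simpl.
  apply (fsum_ge_term I (fun j => A (s + n)%nat i j * evolve I A s v n j) j); auto.
  intros k Hk. destruct (hcs (s + n)%nat) as [H _].
  apply Rmult_le_pos; auto. apply evolve_nonneg; auto.
Qed.

Lemma evolve_unit_bounds s r n i : (r < I)%nat -> (i < I)%nat ->
  0 <= evolve I A s (unit_vec r) n i <= 1.
Proof.
  intros Hr Hi. assert (Hnn := evolve_nonneg s (unit_vec r) n (fun j _ => unit_vec_nonneg r j)).
  split; auto.
  rewrite <- (fsum_unit_vec I r Hr), <- (evolve_sum s (unit_vec r) n).
  apply fsum_ge_term; auto.
Qed.
End Evolve.

Lemma fsum_weighted_band n w g eps lo hi :
  (forall t, (t < n)%nat -> eps <= w t) -> fsum n w = 1 ->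
  (forall t, (t < n)%nat -> lo <= g t <= hi) ->
  eps * fsum n g + (1 - INR n * eps) * lo <= fsum n (fun t => w t * g t)
  <= eps * fsum n g + (1 - INR n * eps) * hi.
Proof.
  intros Hw Hsum Hg.
  assert (Hsplit : fsum n (fun t => w t * g t)
                   = eps * fsum n g + fsum n (fun t => (w t - eps) * g t)).
  { rewrite <- fsum_scal_l, <- fsum_plus. apply fsum_ext; intros; ring. }
  assert (Hexcess : fsum n (fun t => w t - eps) = 1 - INR n * eps).
  { rewrite fsum_minus, Hsum, fsum_const. reflexivity. }
  rewrite Hsplit, <- Hexcess, <- !fsum_scal_r. split; apply Rplus_le_compat_l, fsum_le;
    intros t Ht; specialize (Hw t Ht); specialize (Hg t Ht); nra.
Qed.

Lemma fsum_weighted_mean_dev n x P lo hi :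
  (0 < n)%nat -> 0 < fsum n P -> (forall r, (r < n)%nat -> lo <= P r <= hi) ->
  Rabs (fsum n (fun r => x r * P r) / fsum n P - / INR n * fsum n x)
  <= (hi - lo) / fsum n P * fsum n (fun r => Rabs (x r)).
Proof.
  intros Hn HS HP. set (S := fsum n P) in *.
  assert (Hn' : 0 < INR n) by (apply lt_0_INR; lia).
  set (Pbar := S / INR n).
  assert (HPbar : lo <= Pbar <= hi).
  { assert (INR n * lo <= S <= INR n * hi).
    { rewrite <- !fsum_const. split; apply fsum_le; intros; apply HP; auto. }
    assert (0 < / INR n) by (apply Rinv_0_lt_compat; lra).
    unfold Pbar, Rdiv. split.
    - replace lo with (INR n * lo * / INR n) by (field; lra). apply Rmult_le_compat_r; lra.
    - replace hi with (INR n * hi * / INR n) by (field; lra). apply Rmult_le_compat_r; lra. }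
  assert (Heq : fsum n (fun r => x r * P r) / S - / INR n * fsum n x
                = fsum n (fun r => x r * (P r - Pbar)) / S).
  { assert (fsum n (fun r => x r * (P r - Pbar))
            = fsum n (fun r => x r * P r) - fsum n x * Pbar).
    { rewrite <- fsum_scal_r, <- fsum_minus. apply fsum_ext; intros; ring. }
    rewrite H. unfold Pbar. field. lra. }
  rewrite Heq. unfold Rdiv. rewrite Rabs_mult, (Rabs_right (/ S)) by (left; apply Rinv_0_lt_compat; lra).
  rewrite (Rmult_comm (hi - lo)), Rmult_assoc, (Rmult_comm (/ S)).
  apply Rmult_le_compat_r; [left; apply Rinv_0_lt_compat; lra|].
  eapply Rle_trans; [apply fsum_abs|]. rewrite <- fsum_scal_l. apply fsum_le; intros r Hr.
  rewrite Rabs_mult, Rmult_comm. apply Rmult_le_compat_r; [apply Rabs_pos|].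
  apply Rabs_le. specialize (HP r Hr). lra.
Qed.

Lemma vnorm_le_of_coord_bound I m d x D : 0 <= D ->
  (forall l, (l < m)%nat -> Rabs (d l) <= D * fsum I (fun r => Rabs (x r l))) ->
  vnorm m d <= D * sqrt (INR I) * stacked_norm I m x.
Proof.
  intros HD Hd. unfold vnorm, stacked_norm.
  set (st := fsum I (fun r => fsum m (fun l => x r l ^ 2))).
  assert (HI : 0 <= INR I) by apply pos_INR.
  replace (D * sqrt (INR I) * sqrt st) with (sqrt (D ^ 2 * INR I * st)).
  2:{ assert (0 <= D ^ 2) by apply pow2_ge_0.
      rewrite !sqrt_mult_alt, sqrt_pow2 by (auto; apply Rmult_le_pos; auto). reflexivity. }
  apply sqrt_le_1_alt. unfold st. rewrite fsum_swap, <- fsum_scal_l.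
  apply fsum_le; intros l Hl. specialize (Hd l Hl).
  set (Sa := fsum I (fun r => Rabs (x r l))) in *.
  assert (Hcs : Sa ^ 2 <= INR I * fsum I (fun r => x r l ^ 2)).
  { unfold Sa. eapply Rle_trans; [apply fsum_Cauchy_Schwarz|].
    right. f_equal. apply fsum_ext; intros. apply pow2_abs. }
  assert (d l ^ 2 <= (D * Sa) ^ 2).
  { rewrite <- (pow2_abs (d l)). apply pow_incr. split; [apply Rabs_pos | auto]. }
  assert (0 <= D ^ 2) by apply pow2_ge_0.
  rewrite Rpow_mult_distr in H. nra.
Qed.

Lemma pow_antimono_le1 x a b : 0 <= x <= 1 -> (b <= a)%nat -> x ^ a <= x ^ b.
Proof.
  intros Hx Hab. replace a with (b + (a - b))%nat by lia. rewrite pow_add.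
  assert (x ^ (a - b) <= 1) by (rewrite <- (pow1 (a - b)); apply pow_incr; lra).
  assert (0 <= x ^ b) by (apply pow_le; lra). nra.
Qed.

Lemma Rpower_inv_root a L : 0 < a <= 1 -> (0 < L)%nat ->
  0 < Rpower a (/ INR L) <= 1 /\ Rpower a (/ INR L) ^ L = a.
Proof.
  intros Ha HL. set (rho := Rpower a (/ INR L)).
  assert (Hr0 : 0 < rho) by (unfold rho, Rpower; apply exp_pos).
  assert (HrL : rho ^ L = a).
  { unfold rho. rewrite <- Rpower_pow by (unfold Rpower; apply exp_pos).
    rewrite Rpower_mult, Rinv_l, Rpower_1; [reflexivity | lra | apply not_0_INR; lia]. }
  repeat split; auto.
  destruct (Rle_lt_dec rho 1) as [|Hgt]; auto. pose proof (Rlt_pow_R1 rho L Hgt HL). lra.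
Qed.

Lemma sqrt_le_self x : 1 <= x -> sqrt x <= x.
Proof.
  intros Hx. pose proof (sqrt_sqrt x ltac:(lra)).
  assert (1 <= sqrt x) by (rewrite <- sqrt_1; apply sqrt_le_1_alt; lra). nra.
Qed.

(* The factor [rho ^ L] pays for the last, incomplete block of [L] steps. *)
Lemma pow_div_le q rho L k : 0 <= q -> 0 <= rho <= 1 -> q <= rho ^ L -> (0 < L)%nat ->
  q ^ (k / L) * rho ^ L <= rho ^ k.
Proof.
  intros Hq Hrho HqL HL.
  assert (q ^ (k / L) <= rho ^ (L * (k / L))) by (rewrite pow_mult; apply pow_incr; lra).
  assert (rho ^ (L * (k / L) + L) <= rho ^ k).
  { apply pow_antimono_le1; auto.
    pose proof (Nat.div_mod k L ltac:(lia)). pose proof (Nat.mod_upper_bound k L ltac:(lia)). lia. }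
  rewrite pow_add in H0. assert (0 <= rho ^ L) by (apply pow_le; lra). nra.
Qed.

Lemma kappa_tilde_d_bounds I B kappa : (2 <= I)%nat -> 0 < kappa <= 1 ->
  0 < kappa_tilde_d I B kappa <= kappa / 2.
Proof.
  intros HI Hk. assert (2 <= INR I) by (apply (le_INR 2); lia). unfold kappa_tilde_d. split.
  - apply Rdiv_lt_0_compat; [apply pow_lt|]; lra.
  - assert (kappa ^ (2 * (I - 1) * B + 1) <= kappa ^ 1) by (apply pow_antimono_le1; [split; lra|nia]).
    rewrite pow_1 in H0.
    unfold Rdiv. apply Rle_trans with (kappa * / INR I).
    + apply Rmult_le_compat_r; [left; apply Rinv_0_lt_compat|]; lra.
    + apply Rmult_le_compat_l; [|apply Rinv_le_contravar]; lra.
Qed.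

Lemma push_sum_rate I B kappa k : (2 <= I)%nat -> (0 < B)%nat -> 0 < kappa <= 1 ->
  0 <= 1 - INR I * kappa ^ ((I - 1) * B) ->
  (1 - INR I * kappa ^ ((I - 1) * B)) ^ (k / ((I - 1) * B)) * / kappa ^ ((I - 1) * B)
    * sqrt (INR I)
  <= c_d I B kappa * rho_d I B kappa ^ k.
Proof.
  intros HI HB Hk Hq. assert (HI2 : 2 <= INR I) by (apply (le_INR 2); lia).
  assert (HL : (0 < (I - 1) * B)%nat) by nia.
  pose proof (kappa_tilde_d_bounds I B kappa HI Hk) as Hkt.
  unfold c_d, rho_d. cbv zeta.
  set (L := ((I - 1) * B)%nat) in *.
  set (q := 1 - INR I * kappa ^ L) in *.
  set (t := kappa_tilde_d I B kappa ^ L).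
  assert (Ht0 : 0 < t) by (apply pow_lt; lra).
  assert (HtK : t <= kappa ^ L) by (apply pow_incr; lra).
  assert (Ht1 : t < 1).
  { assert (t <= kappa_tilde_d I B kappa ^ 1) by (apply pow_antimono_le1; [split; lra|nia]).
    rewrite pow_1 in H. lra. }
  destruct (Rpower_inv_root (1 - t) L ltac:(split; lra) HL) as [[Hr0 Hr1] HrL].
  set (rho := Rpower (1 - t) (/ INR L)) in *.
  assert (HkL : 0 < kappa ^ L) by (apply pow_lt; lra).
  assert (Hblock : q ^ (k / L) <= rho ^ k / (1 - t)).
  { replace (q ^ (k / L)) with (q ^ (k / L) * rho ^ L * / (1 - t)) by (rewrite HrL; field; lra).
    apply Rmult_le_compat_r; [left; apply Rinv_0_lt_compat; lra|].
    apply pow_div_le; [exact Hq | split; lra | rewrite HrL; unfold q; nra | exact HL]. }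
  pose proof (sqrt_le_self (INR I) ltac:(lra)) as Hsqrt.
  assert (Hinv : / kappa ^ L * sqrt (INR I) <= / t * INR I).
  { apply Rmult_le_compat; auto.
    - left; apply Rinv_0_lt_compat; lra.
    - apply sqrt_pos.
    - apply Rinv_le_contravar; lra. }
  assert (Hconst : / t * INR I <= 2 * INR I / rho * (2 * (1 + / t))).
  { assert (1 <= / rho) by (rewrite <- Rinv_1; apply Rinv_le_contravar; lra).
    assert (0 < / t) by (apply Rinv_0_lt_compat; lra).
    unfold Rdiv. set (a := / rho) in *. set (b := / t) in *.
    assert (0 <= INR I * b * (a - 1)) by (apply Rmult_le_pos; [apply Rmult_le_pos|]; lra).
    nra. }
  assert (0 <= rho ^ k / (1 - t)).
  { apply Rmult_le_pos; [apply pow_le | left; apply Rinv_0_lt_compat]; lra. }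
  rewrite Rmult_assoc. eapply Rle_trans.
  { apply Rmult_le_compat; [apply pow_le; auto | | exact Hblock | ].
    - apply Rmult_le_pos; [left; apply Rinv_0_lt_compat; lra | apply sqrt_pos].
    - eapply Rle_trans; [exact Hinv | exact Hconst]. }
  right. unfold Rdiv. ring.
Qed.

Section PushSum.
Variables (I B : nat) (E : digraph_seq) (A : matrix_seq) (kappa : R).
Hypotheses (hI : (2 <= I)%nat) (hB : B_strongly_connected I E B) (hkappa : 0 < kappa)
  (hcomp : compliant I E A kappa) (hcs : column_stochastic I A).

Local Notation L := ((I - 1) * B)%nat.

Lemma kappa_le_1 : kappa <= 1.
Proof.
  assert (HI0 : (0 < I)%nat) by lia.
  destruct (hcomp O O O HI0 HI0) as [_ [_ Hdiag]]. destruct (hcs O) as [Hnn Hsum].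
  rewrite <- (Hsum O HI0).
  eapply Rle_trans; [exact Hdiag|]. apply (fsum_ge_term I (fun i => A O i O)); auto.
Qed.

Let reached s r n t := kappa ^ n <= evolve I A s (unit_vec r) n t.

Lemma reached_step s r n u v : (u < I)%nat -> (v < I)%nat ->
  u = v \/ E (s + n)%nat u v -> reached s r n u -> reached s r (S n) v.
Proof.
  intros Hu Hv Huv Hreach. unfold reached in *.
  assert (Ha : kappa <= A (s + n)%nat v u).
  { destruct (hcomp (s + n)%nat v u Hv Hu) as [_ [Hedge Hdiag]].
    destruct Huv as [->|He]; auto. }
  pose proof (evolve_ge_term I A hcs s (unit_vec r) n v u (fun j _ => unit_vec_nonneg r j) Hv Hu).
  pose proof (pow_le kappa n (Rlt_le _ _ hkappa)).
  change (kappa ^ S n) with (kappa * kappa ^ n). nra.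
Qed.

Lemma reached_later s r d n t : (t < I)%nat -> reached s r n t -> reached s r (n + d) t.
Proof.
  intros Ht. induction d; intros Hreach; [rewrite Nat.add_0_r; auto|].
  rewrite Nat.add_succ_r. apply reached_step with t; auto.
Qed.

Lemma reached_source s r n : (r < I)%nat -> reached s r n r.
Proof.
  intros Hr. replace n with (0 + n)%nat by lia. apply reached_later; auto.
  unfold reached; simpl; unfold unit_vec; destruct (Nat.eq_dec r r); [lra|congruence].
Qed.

(* Strong connectivity of the window starting at [s + n] yields an edge from a
   reached node to an unreached one; following it reaches a new node within [B] steps. *)
Lemma reached_window s r n : (r < I)%nat ->
  (exists w, (w < I)%nat /\ ~ reached s r n w) ->
  exists v, (v < I)%nat /\ ~ reached s r n v /\ reached s r (n + B) v.
Proof.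
  intros Hr [w [Hw Hnot]]. destruct hB as [HB0 Hconn].
  destruct (clos_refl_trans_1n_exit _ (fun x => (x < I)%nat /\ reached s r n x) r w
              (Hconn (s + n)%nat r w Hr Hw)) as [x [y [[Hx [Hy [t [Ht1 [Ht2 He]]]]] [[_ Hrx] Hry]]]].
  - split; auto. apply reached_source; auto.
  - intros [_ H]; auto.
  - exists y. repeat split; auto.
    set (d := (t - (s + n))%nat).
    assert (Hy_next : reached s r (S (n + d)) y).
    { apply reached_step with x; auto.
      - right. replace (s + (n + d))%nat with t by (unfold d; lia). auto.
      - apply reached_later; auto. }
    replace (n + B)%nat with (S (n + d) + (B - S d))%nat by (unfold d; lia).
    apply reached_later; auto.
Qed.

Lemma evolve_unit_lower s r t : (r < I)%nat -> (t < I)%nat ->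
  kappa ^ L <= evolve I A s (unit_vec r) L t.
Proof.
  intros Hr. apply (flooding I (fun j t => reached s r (j * B) t)) with r; auto.
  - intros j u. apply Rle_dec.
  - intros j u Hu Hreach. replace (S j * B)%nat with (j * B + B)%nat by lia.
    apply reached_later; auto.
  - intros j Hex. replace (S j * B)%nat with (j * B + B)%nat by lia.
    apply reached_window; auto.
  - apply reached_source; auto.
Qed.

Lemma mixing_factor_nonneg : 0 <= 1 - INR I * kappa ^ L.
Proof.
  assert (Hsum : fsum I (evolve I A 0 (unit_vec 0) L) = 1).
  { rewrite evolve_sum by auto. apply fsum_unit_vec; lia. }
  assert (fsum I (fun _ => kappa ^ L) <= 1).
  { rewrite <- Hsum. apply fsum_le. intros t Ht. apply evolve_unit_lower; [lia | auto]. }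
  rewrite fsum_const in H. lra.
Qed.

Lemma block_length_pos : (0 < L)%nat.
Proof. destruct hB as [HB0 _]. nia. Qed.

(* Each block of [L] steps averages the current values with weights at least
   [kappa ^ L], so every row of the product contracts by [1 - I kappa ^ L]. *)
Lemma evolve_unit_spread i : (i < I)%nat -> forall n s, exists lo hi,
  hi - lo <= (1 - INR I * kappa ^ L) ^ (n / L) /\
  forall r, (r < I)%nat -> lo <= evolve I A s (unit_vec r) n i <= hi.
Proof.
  intros Hi n. induction n as [n IH] using lt_wf_ind. intros s.
  pose proof mixing_factor_nonneg as Hq. pose proof block_length_pos as HL.
  set (q := 1 - INR I * kappa ^ L) in *.
  destruct (Nat.lt_ge_cases n L) as [Hlt|Hge].
  { exists 0, 1. rewrite Nat.div_small by lia. split; [simpl; lra|].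
    intros r Hr. apply evolve_unit_bounds; auto. }
  destruct (IH (n - L)%nat ltac:(lia) (s + L)%nat) as [lo [hi [Hwidth Hband]]].
  set (g t := evolve I A (s + L) (unit_vec t) (n - L) i).
  exists (kappa ^ L * fsum I g + q * lo), (kappa ^ L * fsum I g + q * hi). split.
  - replace (n / L)%nat with ((n - L) / L + 1)%nat.
    + rewrite pow_add, pow_1. nra.
    + replace n with ((n - L) + 1 * L)%nat at 2 by lia. rewrite Nat.div_add; lia.
  - intros r Hr. replace n with (L + (n - L))%nat by lia.
    rewrite evolve_add, evolve_linear by auto.
    apply fsum_weighted_band; auto.
    + intros t Ht. apply evolve_unit_lower; auto.
    + rewrite evolve_sum by auto. apply fsum_unit_vec; auto.
Qed.

Lemma ps_phi_evolve k i : ps_phi I A k i = evolve I A 0 (fun _ => 1) k i.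
Proof.
  revert i; induction k; intros i; simpl; auto.
  apply fsum_ext; intros; rewrite IHk; reflexivity.
Qed.

Lemma ps_phi_ge_pow k i : (i < I)%nat -> kappa ^ k <= ps_phi I A k i.
Proof.
  intros Hi. rewrite ps_phi_evolve. induction k; simpl; [lra|].
  pose proof (evolve_ge_term I A hcs 0 (fun _ => 1) k i i (fun _ _ => Rle_0_1) Hi Hi).
  destruct (hcomp k i i Hi Hi) as [_ [_ Hdiag]].
  pose proof (pow_le kappa k (Rlt_le _ _ hkappa)). simpl in H. nra.
Qed.

Lemma ps_phi_ge_block k i : (i < I)%nat -> kappa ^ L <= ps_phi I A k i.
Proof.
  intros Hi. pose proof kappa_le_1 as Hk1.
  destruct (Nat.le_gt_cases k L) as [Hle|Hgt].
  { eapply Rle_trans; [apply pow_antimono_le1; [split; lra | exact Hle]|].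
    apply ps_phi_ge_pow; auto. }
  rewrite ps_phi_evolve. replace k with ((k - L) + L)%nat by lia.
  rewrite evolve_add, evolve_linear by auto.
  set (w := evolve I A 0 (fun _ => 1) (k - L)).
  assert (Hw : forall r, (r < I)%nat -> 0 <= w r) by (intros; apply evolve_nonneg; auto; intros; lra).
  assert (Hwsum : fsum I w = INR I).
  { unfold w. rewrite evolve_sum, fsum_const by auto. ring. }
  assert (fsum I (fun r => w r * kappa ^ L)
          <= fsum I (fun r => w r * evolve I A (0 + (k - L)) (unit_vec r) L i)).
  { apply fsum_le; intros r Hr. apply Rmult_le_compat_l; auto. apply evolve_unit_lower; auto. }
  rewrite fsum_scal_r, Hwsum in H.
  assert (1 <= INR I) by (apply (le_INR 1); lia).
  pose proof (pow_le kappa L (Rlt_le _ _ hkappa)). nra.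
Qed.

Lemma ps_weighted_evolve x0 l k i : (i < I)%nat ->
  ps_phi I A k i * ps_x I A x0 k i l = evolve I A 0 (fun j => x0 j l) k i.
Proof.
  revert i; induction k; intros i Hi; [simpl; ring|]. cbn [ps_x].
  assert (Hpos : 0 < ps_phi I A (S k) i).
  { eapply Rlt_le_trans; [apply (pow_lt kappa (S k) hkappa)|]. apply ps_phi_ge_pow; auto. }
  rewrite <- Rmult_assoc, Rinv_r, Rmult_1_l by lra.
  simpl. apply fsum_ext; intros j Hj. rewrite <- IHk by auto. ring.
Qed.

Lemma ps_weighted_sum x0 l k :
  fsum I (fun i => ps_phi I A k i * ps_x I A x0 k i l) = fsum I (fun j => x0 j l).
Proof.
  rewrite (fsum_ext I _ (evolve I A 0 (fun j => x0 j l) k)) by (intros; apply ps_weighted_evolve; auto).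
  apply evolve_sum; auto.
Qed.

(* With [P r] the weight of node [r] in the [i]-th row of the product, [x_i] is the
   [P]-weighted mean of [x0] while the network average is its plain mean. *)
Lemma ps_deviation x0 l k i : (i < I)%nat ->
  Rabs (ps_x I A x0 k i l - / INR I * fsum I (fun j => ps_phi I A k j * ps_x I A x0 k j l))
  <= (1 - INR I * kappa ^ L) ^ (k / L) * / kappa ^ L * fsum I (fun r => Rabs (x0 r l)).
Proof.
  intros Hi. rewrite ps_weighted_sum.
  destruct (evolve_unit_spread i Hi k 0) as [lo [hi [Hwidth Hband]]].
  set (P r := evolve I A 0 (unit_vec r) k i).
  assert (HphiP : ps_phi I A k i = fsum I P).
  { rewrite ps_phi_evolve, evolve_linear by auto. apply fsum_ext; intros; unfold P; ring. }
  assert (Hphi : kappa ^ L <= fsum I P) by (rewrite <- HphiP; apply ps_phi_ge_block; auto).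
  assert (HkL : 0 < kappa ^ L) by (apply pow_lt; auto).
  assert (Hx : ps_x I A x0 k i l = fsum I (fun r => x0 r l * P r) / fsum I P).
  { rewrite <- HphiP. pose proof (ps_weighted_evolve x0 l k i Hi) as Hy.
    rewrite evolve_linear in Hy by auto. unfold P. rewrite <- Hy. field. lra. }
  rewrite Hx. eapply Rle_trans.
  { apply (fsum_weighted_mean_dev I _ _ lo hi); [lia | lra | exact Hband]. }
  apply Rmult_le_compat_r; [apply fsum_nonneg; intros; apply Rabs_pos|].
  unfold Rdiv. apply Rmult_le_compat; auto.
  - specialize (Hband 0%nat ltac:(lia)). lra.
  - left; apply Rinv_0_lt_compat; lra.
  - apply Rinv_le_contravar; auto.
Qed.

Lemma ps_consensus_bound x0 m k i : (i < I)%nat ->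
  vnorm m (fun l => ps_x I A x0 k i l
             - / INR I * fsum I (fun j => ps_phi I A k j * ps_x I A x0 k j l))
  <= (1 - INR I * kappa ^ L) ^ (k / L) * / kappa ^ L * sqrt (INR I) * stacked_norm I m x0.
Proof.
  intros Hi. apply vnorm_le_of_coord_bound.
  - apply Rmult_le_pos; [apply pow_le, mixing_factor_nonneg|].
    left; apply Rinv_0_lt_compat, pow_lt; auto.
  - intros l _. apply ps_deviation; auto.
Qed.
End PushSum.

Theorem mainTheorem12
  (I m B : nat) (E : digraph_seq) (A : matrix_seq) (kappa : R)
  (x0 : nat -> nat -> R)
  (hI : (2 <= I)%nat)
  (hB : B_strongly_connected I E B)
  (hkappa : 0 < kappa)
  (hcomp : compliant I E A kappa)
  (hcs : column_stochastic I A) :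
  forall k : nat,
    (forall l : nat,
       fsum I (fun i => ps_phi I A (S k) i * ps_x I A x0 (S k) i l)
       = fsum I (fun i => ps_phi I A k i * ps_x I A x0 k i l) /\
       fsum I (fun i => ps_phi I A k i * ps_x I A x0 k i l)
       = fsum I (fun i => ps_phi I A 0 i * ps_x I A x0 0 i l)) /\
    (forall i : nat, (i < I)%nat ->
       vnorm m (fun l => ps_x I A x0 k i l
                 - / INR I * fsum I (fun j => ps_phi I A k j * ps_x I A x0 k j l))
       <= c_d I B kappa * rho_d I B kappa ^ k * stacked_norm I m x0).
Proof.
  intros k. split.
  - intros l. rewrite !(ps_weighted_sum I E A kappa hkappa hcomp hcs x0 l). split; reflexivity.
  - intros i Hi.
    eapply Rle_trans; [exact (ps_consensus_bound I B E A kappa hI hB hkappa hcomp hcs x0 m k i Hi)|].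
    apply Rmult_le_compat_r; [apply sqrt_pos|].
    apply push_sum_rate; auto.
    + apply hB.
    + split; [exact hkappa | exact (kappa_le_1 I E A kappa hI hcomp hcs)].
    + exact (mixing_factor_nonneg I B E A kappa hI hB hkappa hcomp hcs).
Qed.
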